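(* Let $T$ be a triangle with no right angle. Then the complete 3-graph $K_4^3$ on four vertices (edges $123,124,134,234$) is forbidden for $T$.
   Context: A 3-graph is a 3-uniform hypergraph; $G$ is $F$-free if it has no (not necessarily induced) subhypergraph isomorphic to $F$. For a triangle $T$ with side lengths $a,b,c$ and $\varepsilon>0$, with $\varepsilon'=\varepsilon\min\{a,b,c\}$, a triangle $A'B'C'$ is $\varepsilon$-congruent to $T$ if there are $A,B,C\in\mathbb{R}^2$ with $ABC$ congruent to $T$ and $A',B',C'$ within distance $\varepsilon'$ of $A,B,C$ respectively. For finite $P\subseteq\mathbb{R}^2$, $\mathcal{H}(T,P,\varepsilon)$ is the 3-graph on $P$ whose edges are triples forming triangles $\varepsilon$-congruent to $T$. A 3-graph $H$ is forbidden for $T$ if there exists $\varepsilon>0$ such that for every $P\subseteq\mathbb{R}^2$ with $|P|=|V(H)|$, $\mathcal{H}(T,P,\varepsilon)$ is $H$-free. *)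

From Stdlib Require Import Reals List.
Import ListNotations.
Open Scope R_scope.

Definition point : Type := (R * R)%type.

Definition dist (p q : point) : R :=
  sqrt ((fst p - fst q)^2 + (snd p - snd q)^2).

Record tri3 : Type := Tri3 {
  side_a : R; side_b : R; side_c : R;
  side_a_pos : 0 < side_a; side_b_pos : 0 < side_b; side_c_pos : 0 < side_c;
  tri_ab : side_c < side_a + side_b;
  tri_bc : side_a < side_b + side_c;
  tri_ca : side_b < side_c + side_a }.

Definition right_angled (T : tri3) : Prop :=
  let a := side_a T in let b := side_b T in let c := side_c T in
  a^2 + b^2 = c^2 \/ b^2 + c^2 = a^2 \/ c^2 + a^2 = b^2.

Definition congruent (A B C : point) (T : tri3) : Prop :=
  let a := side_a T in let b := side_b T in let c := side_c T in
  let x := dist B C in let y := dist C A in let z := dist A B in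
  (x = a /\ y = b /\ z = c) \/ (x = a /\ y = c /\ z = b) \/
  (x = b /\ y = a /\ z = c) \/ (x = b /\ y = c /\ z = a) \/
  (x = c /\ y = a /\ z = b) \/ (x = c /\ y = b /\ z = a).

Definition eps_congruent (T : tri3) (eps : R) (A' B' C' : point) : Prop :=
  let eps' := eps * Rmin (side_a T) (Rmin (side_b T) (side_c T)) in
  exists A B C : point, congruent A B C T /\
    dist A' A <= eps' /\ dist B' B <= eps' /\ dist C' C <= eps'.

Definition HTPe_edge (T : tri3) (P : list point) (eps : R)
    (p q r : point) : Prop :=
  In p P /\ In q P /\ In r P /\ p <> q /\ q <> r /\ p <> r /\
  eps_congruent T eps p q r.

(* A 3-graph H on vertex set {0,...,nv-1} with edge list (triples) *)
Record hgraph3 : Type := HGraph3 {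
  hg_nv : nat;
  hg_edges : list (nat * nat * nat) }.

(* G (vertex list P, edge relation E) contains a (not necessarily induced)
   copy of H: an injective map of the vertices of H into P sending edges
   to edges. *)
Definition contains_copy (H : hgraph3) (P : list point)
    (E : point -> point -> point -> Prop) : Prop :=
  exists f : nat -> point,
    (forall i, (i < hg_nv H)%nat -> In (f i) P) /\
    (forall i j, (i < hg_nv H)%nat -> (j < hg_nv H)%nat -> f i = f j -> i = j) /\
    (forall i j k, In (i, j, k) (hg_edges H) -> E (f i) (f j) (f k)).

Definition forbidden (H : hgraph3) (T : tri3) : Prop :=
  exists eps : R, 0 < eps /\
    forall P : list point, NoDup P -> length P = hg_nv H ->
      ~ contains_copy H P (HTPe_edge T P eps).

(* complete 3-graph on 4 vertices: edges 123,124,134,234 (0-indexed) *)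
Definition K43 : hgraph3 :=
  HGraph3 4 [(0,1,2); (0,1,3); (0,2,3); (1,2,3)]%nat.

(* Suppose p0 p1 p2 p3 span a copy of K_4^3.  For eps small, each distance
   |p_i p_j| lies within delta of exactly one side length of T, and on every face
   these labels form a permutation of (a, b, c); comparing two faces along their
   common edge shows that opposite edges carry equal labels.  So the points nearly
   realise the tetrahedron whose opposite edges have lengths a, a, b, b, c, c.  Its
   Gram determinant is (b^2+c^2-a^2)(c^2+a^2-b^2)(a^2+b^2-c^2)/2, nonzero because T
   has no right angle, while four points of the plane have Gram determinant 0; as
   the determinant is Lipschitz on bounded sets, this fails once delta is small. *)

From Stdlib Require Import Reals List Lra Psatz.
From Stdlib Require Rgeom.
Import ListNotations.
Open Scope R_scope.

Lemma dist_sym p q : dist p q = dist q p.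
Proof. destruct p, q; unfold dist; simpl; f_equal; ring. Qed.

Lemma dist_ge0 p q : 0 <= dist p q.
Proof. apply sqrt_pos. Qed.

Lemma dist_sqr p q : dist p q ^ 2 = (fst p - fst q) ^ 2 + (snd p - snd q) ^ 2.
Proof. unfold dist. apply pow2_sqrt. apply Rplus_le_le_0_compat; apply pow2_ge_0. Qed.

Lemma dist_euc (p q : point) : dist p q = Rgeom.dist_euc (fst p) (snd p) (fst q) (snd q).
Proof. unfold dist, Rgeom.dist_euc, Rsqr; f_equal; ring. Qed.

Lemma dist_triangle p q r : dist p r <= dist p q + dist q r.
Proof. rewrite !dist_euc. apply Rgeom.triangle. Qed.

Lemma Rabs_dist_sub_le X Y A B : Rabs (dist X Y - dist A B) <= dist X A + dist Y B.
Proof.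
  apply Rabs_le.
  pose proof (dist_triangle X A Y); pose proof (dist_triangle A B Y).
  pose proof (dist_triangle A X B); pose proof (dist_triangle X Y B).
  rewrite (dist_sym A X), (dist_sym B Y) in *. lra.
Qed.

Lemma Rabs_le_inv x e : Rabs x <= e -> -e <= x <= e.
Proof. unfold Rabs; destruct Rcase_abs; lra. Qed.

Lemma Rabs_mult3_le p q r P Q R : Rabs p <= P -> Rabs q <= Q -> Rabs r <= R ->
  Rabs (p * q * r) <= P * Q * R.
Proof.
  intros Hp Hq Hr. rewrite !Rabs_mult.
  pose proof (Rabs_pos p); pose proof (Rabs_pos q); pose proof (Rabs_pos r).
  apply Rmult_le_compat; try apply Rmult_le_compat; try apply Rmult_le_pos; lra.
Qed.

Definition det3 (m11 m12 m13 m22 m23 m33 : R) : R :=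
  m11 * m22 * m33 + m12 * m23 * m13 + m13 * m12 * m23
  - m11 * m23 * m23 - m22 * m13 * m13 - m33 * m12 * m12.

Section Perturbation.

Variables K eta : R.
Hypothesis eta_le1 : eta <= 1.

Definition perturb (x x' : R) : Prop := Rabs x <= K /\ Rabs (x' - x) <= eta.

Lemma perturb_bound x x' : perturb x x' -> Rabs x' <= K + 1.
Proof.
  intros [Hx Hx']. replace x' with (x + (x' - x)) by ring.
  eapply Rle_trans; [apply Rabs_triang | lra].
Qed.

Lemma Rabs_mult3_perturb x y z x' y' z' :
  perturb x x' -> perturb y y' -> perturb z z' ->
  Rabs (x' * y' * z' - x * y * z) <= 3 * (K + 1) ^ 2 * eta.
Proof.
  intros Px Py Pz.
  pose proof (perturb_bound _ _ Py) as By'; pose proof (perturb_bound _ _ Pz) as Bz'.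
  destruct Px as [Bx Ex], Py as [By Ey], Pz as [Bz Ez].
  replace (x' * y' * z' - x * y * z)
    with ((x' - x) * y' * z' + (x * (y' - y) * z' + x * y * (z' - z))) by ring.
  pose proof (Rabs_mult3_le _ _ _ _ _ _ Ex By' Bz').
  pose proof (Rabs_mult3_le x _ _ (K + 1) _ _ ltac:(lra) Ey Bz').
  pose proof (Rabs_mult3_le x y _ (K + 1) (K + 1) _ ltac:(lra) ltac:(lra) Ez).
  pose proof (Rabs_triang ((x' - x) * y' * z') (x * (y' - y) * z' + x * y * (z' - z))).
  pose proof (Rabs_triang (x * (y' - y) * z') (x * y * (z' - z))).
  nra.
Qed.

Lemma Rabs_det3_perturb m11 m12 m13 m22 m23 m33 n11 n12 n13 n22 n23 n33 :
  perturb m11 n11 -> perturb m12 n12 -> perturb m13 n13 ->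
  perturb m22 n22 -> perturb m23 n23 -> perturb m33 n33 ->
  Rabs (det3 n11 n12 n13 n22 n23 n33 - det3 m11 m12 m13 m22 m23 m33)
    <= 18 * (K + 1) ^ 2 * eta.
Proof.
  intros P11 P12 P13 P22 P23 P33. apply Rabs_le. unfold det3.
  pose proof (Rabs_le_inv _ _ (Rabs_mult3_perturb _ _ _ _ _ _ P11 P22 P33)).
  pose proof (Rabs_le_inv _ _ (Rabs_mult3_perturb _ _ _ _ _ _ P12 P23 P13)).
  pose proof (Rabs_le_inv _ _ (Rabs_mult3_perturb _ _ _ _ _ _ P13 P12 P23)).
  pose proof (Rabs_le_inv _ _ (Rabs_mult3_perturb _ _ _ _ _ _ P11 P23 P23)).
  pose proof (Rabs_le_inv _ _ (Rabs_mult3_perturb _ _ _ _ _ _ P22 P13 P13)).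
  pose proof (Rabs_le_inv _ _ (Rabs_mult3_perturb _ _ _ _ _ _ P33 P12 P12)).
  lra.
Qed.

End Perturbation.

(* Gram determinant of p1 - p0, p2 - p0, p3 - p0 in terms of the squared
   distances d_ij, by polarisation: (p_i - p_0).(p_j - p_0) = (d_0i + d_0j - d_ij)/2. *)
Definition gram3 (d01 d02 d03 d12 d13 d23 : R) : R :=
  det3 d01 ((d01 + d02 - d12) / 2) ((d01 + d03 - d13) / 2)
       d02 ((d02 + d03 - d23) / 2) d03.

Lemma Rabs_gram3_perturb K eta d01 d02 d03 d12 d13 d23 e01 e02 e03 e12 e13 e23 :
  2 * eta <= 1 ->
  0 <= d01 <= K -> 0 <= d02 <= K -> 0 <= d03 <= K ->
  0 <= d12 <= K -> 0 <= d13 <= K -> 0 <= d23 <= K ->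
  Rabs (e01 - d01) <= eta -> Rabs (e02 - d02) <= eta -> Rabs (e03 - d03) <= eta ->
  Rabs (e12 - d12) <= eta -> Rabs (e13 - d13) <= eta -> Rabs (e23 - d23) <= eta ->
  Rabs (gram3 e01 e02 e03 e12 e13 e23 - gram3 d01 d02 d03 d12 d13 d23)
    <= 36 * (K + 1) ^ 2 * eta.
Proof.
  intros Heta B01 B02 B03 B12 B13 B23 E01 E02 E03 E12 E13 E23.
  apply Rabs_le_inv in E01, E02, E03, E12, E13, E23.
  replace (36 * (K + 1) ^ 2 * eta) with (18 * (K + 1) ^ 2 * (2 * eta)) by ring.
  unfold gram3; apply Rabs_det3_perturb; [lra | split; apply Rabs_le; lra ..].
Qed.

Lemma gram3_planar p0 p1 p2 p3 :
  gram3 (dist p0 p1 ^ 2) (dist p0 p2 ^ 2) (dist p0 p3 ^ 2)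
        (dist p1 p2 ^ 2) (dist p1 p3 ^ 2) (dist p2 p3 ^ 2) = 0.
Proof.
  rewrite !dist_sqr. destruct p0, p1, p2, p3; cbn [fst snd].
  unfold gram3, det3. field.
Qed.

(* By the law of cosines this is 8 a^2 b^2 c^2 cos(alpha) cos(beta) cos(gamma). *)
Definition cosine_product (a b c : R) : R :=
  (b ^ 2 + c ^ 2 - a ^ 2) * (c ^ 2 + a ^ 2 - b ^ 2) * (a ^ 2 + b ^ 2 - c ^ 2).

Lemma gram3_equifacial A B C :
  gram3 (C ^ 2) (B ^ 2) (A ^ 2) (A ^ 2) (B ^ 2) (C ^ 2) = cosine_product A B C / 2.
Proof. unfold gram3, det3, cosine_product. field. Qed.

Lemma cosine_product_neq0 (T : tri3) :
  ~ right_angled T -> cosine_product (side_a T) (side_b T) (side_c T) <> 0.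
Proof.
  unfold right_angled, cosine_product; cbv zeta. intros HR H.
  apply Rmult_integral in H as [H | H]; [apply Rmult_integral in H as [H | H] |];
    apply HR; lra.
Qed.

Definition perm3 (a b c u v w : R) : Prop :=
  (u = a /\ v = b /\ w = c) \/ (u = a /\ v = c /\ w = b) \/
  (u = b /\ v = a /\ w = c) \/ (u = b /\ v = c /\ w = a) \/
  (u = c /\ v = a /\ w = b) \/ (u = c /\ v = b /\ w = a).

Ltac destruct_perm3 H :=
  destruct H as [[-> [-> ->]] | [[-> [-> ->]] | [[-> [-> ->]] |
                 [[-> [-> ->]] | [[-> [-> ->]] | [-> [-> ->]]]]]]].

Lemma perm3_In a b c u v w :
  perm3 a b c u v w -> In u [a; b; c] /\ In v [a; b; c] /\ In w [a; b; c].
Proof. intros H; destruct_perm3 H; simpl; tauto. Qed.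

Lemma perm3_symmetric a b c u v w : perm3 a b c u v w ->
  u + v + w = a + b + c /\ u * v + v * w + w * u = a * b + b * c + c * a.
Proof. intros H; destruct_perm3 H; split; ring. Qed.

Lemma cosine_product_perm3 a b c u v w :
  perm3 a b c u v w -> cosine_product u v w = cosine_product a b c.
Proof. intros H; destruct_perm3 H; unfold cosine_product; ring. Qed.

Lemma pair_eq_of_sum_mul y z y' z' : y + z = y' + z' -> y * z = y' * z' ->
  (y = y' /\ z = z') \/ (y = z' /\ z = y').
Proof.
  intros Hs Hp.
  assert (E : (y - y') * (y - z') = 0).
  { replace ((y - y') * (y - z')) with (y * y - y * (y' + z') + y' * z') by ring.
    rewrite <- Hs, <- Hp. ring. }
  destruct (Rmult_integral _ _ E); [left | right]; split; lra.
Qed.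

Lemma pair_eq_of_symmetric x y z y' z' :
  x + y + z = x + y' + z' -> x * y + y * z + z * x = x * y' + y' * z' + z' * x ->
  (y = y' /\ z = z') \/ (y = z' /\ z = y').
Proof.
  intros Hs Hp. assert (Hs' : y + z = y' + z') by lra.
  apply pair_eq_of_sum_mul; [exact Hs' |].
  replace (y * z) with (x * y + y * z + z * x - x * (y + z)) by ring.
  replace (y' * z') with (x * y' + y' * z' + z' * x - x * (y' + z')) by ring.
  rewrite Hs', Hp. ring.
Qed.

(* x_ij labels the edge p_i p_j of a tetrahedron p0 p1 p2 p3. *)
Lemma perm3_opposite_edges a b c x01 x02 x03 x12 x13 x23 :
  perm3 a b c x12 x02 x01 -> perm3 a b c x13 x03 x01 ->
  perm3 a b c x23 x03 x02 -> perm3 a b c x23 x13 x12 ->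
  x01 = x23 /\ x02 = x13 /\ x03 = x12.
Proof.
  intros P012 P013 P023 P123.
  destruct (perm3_symmetric _ _ _ _ _ _ P012) as [S012 E012].
  destruct (perm3_symmetric _ _ _ _ _ _ P013) as [S013 E013].
  destruct (perm3_symmetric _ _ _ _ _ _ P023) as [S023 E023].
  destruct (perm3_symmetric _ _ _ _ _ _ P123) as [S123 E123].
  assert (C01 : (x02 = x03 /\ x12 = x13) \/ (x02 = x13 /\ x12 = x03)).
  { apply (pair_eq_of_symmetric x01); [lra | rewrite <- E013 in E012; lra]. }
  assert (C23 : (x02 = x12 /\ x03 = x13) \/ (x02 = x13 /\ x03 = x12)).
  { apply (pair_eq_of_symmetric x23); [lra | rewrite <- E123 in E023; lra]. }
  destruct C01 as [[] | []], C23 as [[] | []]; repeat split; lra.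
Qed.

Lemma point_separated (a : R) (l : list R) :
  exists g, 0 < g /\ forall y, In y l -> Rabs (a - y) < g -> a = y.
Proof.
  induction l as [| y l [g [Hg Hl]]].
  - exists 1. split; [lra | intros y []].
  - destruct (Req_dec a y) as [Hay | Hay].
    + exists g. split; [exact Hg |]. intros z [<- | Hz]; auto.
    + assert (Hd : 0 < Rabs (a - y)) by (apply Rabs_pos_lt; lra).
      exists (Rmin g (Rabs (a - y))). split; [apply Rmin_pos; lra |].
      pose proof (Rmin_l g (Rabs (a - y))); pose proof (Rmin_r g (Rabs (a - y))).
      intros z [<- | Hz] Hlt; [lra | apply Hl; [exact Hz | lra]].
Qed.

Lemma list_separated (l : list R) :
  exists g, 0 < g /\ forall x y, In x l -> In y l -> Rabs (x - y) < g -> x = y.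
Proof.
  induction l as [| a l [g [Hg Hl]]].
  - exists 1. split; [lra | intros x y []].
  - destruct (point_separated a l) as [h [Hh Ha]].
    exists (Rmin h g). split; [apply Rmin_pos; lra |].
    pose proof (Rmin_l h g); pose proof (Rmin_r h g).
    intros x y [<- | Hx] [<- | Hy] Hlt; auto.
    + apply Ha; [exact Hy | lra].
    + symmetry. apply Ha; [exact Hx | rewrite Rabs_minus_sym; lra].
    + apply Hl; [exact Hx | exact Hy | lra].
Qed.

Definition near_congruent (a b c del : R) (X Y Z : point) : Prop :=
  exists u v w, perm3 a b c u v w /\ Rabs (dist Y Z - u) <= del /\
    Rabs (dist Z X - v) <= del /\ Rabs (dist X Y - w) <= del.

Lemma eps_congruent_near_congruent T eps X Y Z :
  eps_congruent T eps X Y Z ->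
  near_congruent (side_a T) (side_b T) (side_c T)
    (2 * (eps * Rmin (side_a T) (Rmin (side_b T) (side_c T)))) X Y Z.
Proof.
  intros [A [B [C [HABC [HA [HB HC]]]]]].
  exists (dist B C), (dist C A), (dist A B).
  split; [exact HABC |].
  repeat split; eapply Rle_trans; try apply Rabs_dist_sub_le; lra.
Qed.

Section Equifacial.

Variables a b c del : R.
Hypothesis sides_separated : forall x y, In x [a; b; c] -> In y [a; b; c] ->
  Rabs (x - y) <= 2 * del -> x = y.

Lemma side_label_unique d x y : In x [a; b; c] -> In y [a; b; c] ->
  Rabs (d - x) <= del -> Rabs (d - y) <= del -> x = y.
Proof.
  intros Hx Hy Ex Ey. apply sides_separated; [exact Hx | exact Hy |].
  apply Rabs_le_inv in Ex, Ey. apply Rabs_le. lra.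
Qed.

Lemma near_equifacial p0 p1 p2 p3 :
  near_congruent a b c del p0 p1 p2 -> near_congruent a b c del p0 p1 p3 ->
  near_congruent a b c del p0 p2 p3 -> near_congruent a b c del p1 p2 p3 ->
  exists A B C, perm3 a b c A B C /\
    Rabs (dist p1 p2 - A) <= del /\ Rabs (dist p0 p3 - A) <= del /\
    Rabs (dist p0 p2 - B) <= del /\ Rabs (dist p1 p3 - B) <= del /\
    Rabs (dist p0 p1 - C) <= del /\ Rabs (dist p2 p3 - C) <= del.
Proof.
  intros [u1 [v1 [w1 [P1 [A1 [B1 C1]]]]]] [u2 [v2 [w2 [P2 [A2 [B2 C2]]]]]]
         [u3 [v3 [w3 [P3 [A3 [B3 C3]]]]]] [u4 [v4 [w4 [P4 [A4 [B4 C4]]]]]].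
  rewrite (dist_sym p2 p0) in B1. rewrite (dist_sym p3 p0) in B2, B3.
  rewrite (dist_sym p3 p1) in B4.
  destruct (perm3_In _ _ _ _ _ _ P1) as [I1 [J1 K1]].
  destruct (perm3_In _ _ _ _ _ _ P2) as [I2 [J2 K2]].
  destruct (perm3_In _ _ _ _ _ _ P3) as [I3 [J3 K3]].
  destruct (perm3_In _ _ _ _ _ _ P4) as [I4 [J4 K4]].
  pose proof (side_label_unique _ _ _ K1 K2 C1 C2) as <-.
  pose proof (side_label_unique _ _ _ J1 K3 B1 C3) as <-.
  pose proof (side_label_unique _ _ _ J2 J3 B2 B3) as <-.
  pose proof (side_label_unique _ _ _ I1 K4 A1 C4) as <-.
  pose proof (side_label_unique _ _ _ I2 J4 A2 B4) as <-.
  pose proof (side_label_unique _ _ _ I3 I4 A3 A4) as <-.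
  destruct (perm3_opposite_edges _ _ _ _ _ _ _ _ _ P1 P2 P3 P4) as [<- [<- <-]].
  do 3 eexists; split; [exact P1 | repeat split; assumption].
Qed.

End Equifacial.

Lemma Rabs_sqr_sub_le d x M del : 0 <= d -> 0 <= x <= M -> del <= 1 ->
  Rabs (d - x) <= del -> Rabs (d ^ 2 - x ^ 2) <= del * (2 * M + 1).
Proof.
  intros Hd Hx Hdel Hdx. pose proof (Rabs_le_inv _ _ Hdx).
  replace (d ^ 2 - x ^ 2) with ((d - x) * (d + x)) by ring.
  rewrite Rabs_mult, (Rabs_pos_eq (d + x)) by lra.
  apply Rmult_le_compat; solve [apply Rabs_pos | lra].
Qed.

Lemma cosine_product_near_equifacial p0 p1 p2 p3 A B C M del :
  0 <= A <= M -> 0 <= B <= M -> 0 <= C <= M -> 2 * del * (2 * M + 1) <= 1 ->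
  Rabs (dist p1 p2 - A) <= del -> Rabs (dist p0 p3 - A) <= del ->
  Rabs (dist p0 p2 - B) <= del -> Rabs (dist p1 p3 - B) <= del ->
  Rabs (dist p0 p1 - C) <= del -> Rabs (dist p2 p3 - C) <= del ->
  Rabs (cosine_product A B C) <= 72 * (M ^ 2 + 1) ^ 2 * (2 * M + 1) * del.
Proof.
  intros HA HB HC Hdel E12 E03 E02 E13 E01 E23.
  assert (del_le1 : del <= 1).
  { pose proof (Rle_trans _ _ _ (Rabs_pos _) E01). nra. }
  assert (Hsq : forall x, 0 <= x <= M -> 0 <= x ^ 2 <= M ^ 2).
  { intros x Hx. split; [apply pow2_ge_0 | apply pow_incr; lra]. }
  pose proof (Rabs_gram3_perturb (M ^ 2) (del * (2 * M + 1))
    (C ^ 2) (B ^ 2) (A ^ 2) (A ^ 2) (B ^ 2) (C ^ 2)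
    (dist p0 p1 ^ 2) (dist p0 p2 ^ 2) (dist p0 p3 ^ 2)
    (dist p1 p2 ^ 2) (dist p1 p3 ^ 2) (dist p2 p3 ^ 2)) as Hgram.
  rewrite gram3_planar, gram3_equifacial, Rminus_0_l, Rabs_Ropp in Hgram.
  unfold Rdiv in Hgram. rewrite Rabs_mult, (Rabs_pos_eq (/ 2)) in Hgram by lra.
  enough (Rabs (cosine_product A B C) * / 2 <=
          36 * (M ^ 2 + 1) ^ 2 * (del * (2 * M + 1))) by lra.
  apply Hgram; try lra; try (apply Hsq; assumption);
    apply Rabs_sqr_sub_le; solve [apply dist_ge0 | assumption].
Qed.

Lemma K4_near_congruent_cosine_bound a b c del p0 p1 p2 p3 :
  0 < a -> 0 < b -> 0 < c ->
  (forall x y, In x [a; b; c] -> In y [a; b; c] -> Rabs (x - y) <= 2 * del -> x = y) ->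
  2 * del * (2 * (a + b + c) + 1) <= 1 ->
  near_congruent a b c del p0 p1 p2 -> near_congruent a b c del p0 p1 p3 ->
  near_congruent a b c del p0 p2 p3 -> near_congruent a b c del p1 p2 p3 ->
  Rabs (cosine_product a b c)
    <= 72 * ((a + b + c) ^ 2 + 1) ^ 2 * (2 * (a + b + c) + 1) * del.
Proof.
  intros Ha Hb Hc Hsep Hdel F012 F013 F023 F123.
  destruct (near_equifacial a b c del Hsep p0 p1 p2 p3 F012 F013 F023 F123)
    as [A [B [C [HABC E]]]].
  rewrite <- (cosine_product_perm3 _ _ _ _ _ _ HABC).
  destruct (perm3_In _ _ _ _ _ _ HABC) as [IA [IB IC]]. simpl in IA, IB, IC.
  apply (cosine_product_near_equifacial p0 p1 p2 p3); [lra .. | apply E].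
Qed.

Lemma small_pos_exists g k q : 0 < g -> 0 < k -> 0 < q ->
  exists d, 0 < d /\ 2 * d < g /\ d * k < q.
Proof.
  intros Hg Hk Hq. exists (Rmin (g / 4) (q / (2 * k))).
  pose proof (Rmin_l (g / 4) (q / (2 * k))) as Hl.
  pose proof (Rmin_r (g / 4) (q / (2 * k))) as Hr.
  assert (Hqk : 0 < q / (2 * k)) by (apply Rdiv_lt_0_compat; lra).
  split; [apply Rmin_pos; lra | split; [lra |]].
  apply Rle_lt_trans with (q / (2 * k) * k); [apply Rmult_le_compat_r; lra |].
  replace (q / (2 * k) * k) with (q / 2) by (field; lra). lra.
Qed.

Lemma tolerance_exists g M q : 0 < g -> 0 <= M -> 0 < q ->
  exists del, 0 < del /\ 2 * del < g /\ 2 * del * (2 * M + 1) <= 1 /\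
    72 * (M ^ 2 + 1) ^ 2 * (2 * M + 1) * del < q.
Proof.
  intros Hg HM Hq.
  set (L := 72 * (M ^ 2 + 1) ^ 2 * (2 * M + 1)).
  assert (HL : 144 * M + 72 <= L).
  { assert (1 <= (M ^ 2 + 1) ^ 2) by (pose proof (pow2_ge_0 M); nra). unfold L; nra. }
  destruct (small_pos_exists g L (Rmin 1 q) Hg ltac:(lra) ltac:(apply Rmin_pos; lra))
    as [del [Hdel [Hdelg HdelL]]].
  pose proof (Rmin_l 1 q); pose proof (Rmin_r 1 q).
  exists del. repeat split; nra.
Qed.

Theorem lemma2p8 (T : tri3) : ~ right_angled T -> forbidden K43 T.
Proof.
  intros HR.
  pose proof (side_a_pos T) as Ha; pose proof (side_b_pos T) as Hb;
    pose proof (side_c_pos T) as Hc.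
  pose proof (Rabs_pos_lt _ (cosine_product_neq0 T HR)) as HQ.
  set (a := side_a T) in *; set (b := side_b T) in *; set (c := side_c T) in *.
  destruct (list_separated [a; b; c]) as [g [Hg Hsep]].
  destruct (tolerance_exists g (a + b + c) _ Hg ltac:(lra) HQ)
    as [del [Hdel [Hdelg [Hdel1 HdelQ]]]].
  set (m := Rmin a (Rmin b c)).
  assert (Hm : 0 < m) by (repeat apply Rmin_pos; lra).
  exists (del / (2 * m)). split; [apply Rdiv_lt_0_compat; lra |].
  intros P _ _ [f [_ [_ Hedges]]].
  assert (Hface : forall i j k, In (i, j, k) (hg_edges K43) ->
            near_congruent a b c del (f i) (f j) (f k)).
  { intros i j k Hijk. replace del with (2 * (del / (2 * m) * m)) by (field; lra).
    apply eps_congruent_near_congruent, (Hedges _ _ _ Hijk). }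
  apply (Rlt_not_le _ _ HdelQ).
  apply (K4_near_congruent_cosine_bound a b c del (f 0%nat) (f 1%nat) (f 2%nat) (f 3%nat));
    try assumption; try (apply Hface; simpl; tauto).
  intros x y Hx Hy Hxy. apply Hsep; [exact Hx | exact Hy | lra].
Qed.
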